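(* Let $L\subseteq\Sigma^\omega$ be an $\omega$-language accepted by a Büchi $k$-counter automaton $\mathcal{A}$ such that $L$ is analytic but not Borel. Then the set of $\omega$-words which have $2^{\aleph_0}$ accepting runs of $\mathcal{A}$ has cardinality $2^{\aleph_0}$.
   Context: A (real-time) Büchi $k$-counter automaton is $(K,\Sigma,\Delta,q_0,F)$ with finite states $K$, initial state $q_0$, accepting states $F$, $\Delta\subseteq K\times\Sigma\times\{0,1\}^k\times K\times\{-1,0,1\}^k$ (no transition with $i_m=0$ and $j_m=-1$). From configuration $(q,c)\in K\times\mathbb{N}^k$, reading $a$, it may go to $(q',c+j)$ if $(q,a,i,q',j)\in\Delta$ with $i_m=0$ iff $c_m=0$. A run on an $\omega$-word is an infinite sequence of configurations from $(q_0,0,\dots,0)$ following the letters; it is accepting if a state of $F$ occurs infinitely often. Two runs are distinct if their sequences of configurations (including counter values) differ. Topology is the Cantor topology on $\Sigma^\omega$. *)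

From mathcomp Require Import all_boot all_order all_algebra.
Set Implicit Arguments.
Unset Strict Implicit.
Unset Printing Implicit Defensive.
Import GRing.Theory Num.Theory.

Definition oword (Sigma : Type) := nat -> Sigma.

Definition agree (A : Type) (n : nat) (x y : nat -> A) : Prop :=
  forall i, (i < n)%N -> x i = y i.

Definition cantor_open (Sigma : Type) (U : oword Sigma -> Prop) : Prop :=
  forall x, U x -> exists n, forall y, agree n x y -> U y.

Inductive borel (Sigma : Type) : (oword Sigma -> Prop) -> Prop :=
| borel_open U : cantor_open U -> borel U
| borel_compl U : borel U -> borel (fun x => ~ U x)
| borel_cunion (U : nat -> oword Sigma -> Prop) :
    (forall n, borel (U n)) -> borel (fun x => exists n, U n x).

Definition baire_continuous (Sigma : Type) (f : (nat -> nat) -> oword Sigma) :=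
  forall (y : nat -> nat) (n : nat), exists m,
    forall y', agree m y y' -> agree n (f y) (f y').

Definition analytic (Sigma : Type) (L : oword Sigma -> Prop) : Prop :=
  (forall x, ~ L x) \/
  exists f : (nat -> nat) -> oword Sigma,
    baire_continuous f /\ forall x, L x <-> exists y, f y = x.

Definition card_continuum (T : Type) (P : T -> Prop) : Prop :=
  exists f : (nat -> bool) -> {x : T | P x}, bijective f.

(* Delta q a i q' j : transition (q,a,i,q',j); i m = true means "counter m
   is nonzero" (i_m = 1), j m in {-1,0,1} is the counter increment. *)
Record counter_automaton (Sigma K : finType) (k : nat) := CounterAutomaton {
  q0 : K;
  final : {set K};
  Delta : K -> Sigma -> {ffun 'I_k -> bool} -> K -> {ffun 'I_k -> int} -> bool;
  Delta_incr : forall q a i q' j, Delta q a i q' j ->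
    forall m, j m \in [:: (-1)%R; 0%R; 1%R];
  Delta_nodec0 : forall q a i q' j, Delta q a i q' j ->
    forall m, i m = false -> j m != (-1)%R
}.

Definition config (K : Type) (k : nat) := (K * {ffun 'I_k -> nat})%type.

Definition step (Sigma K : finType) (k : nat) (A : counter_automaton Sigma K k)
  (c : config K k) (a : Sigma) (c' : config K k) : Prop :=
  exists (i : {ffun 'I_k -> bool}) (j : {ffun 'I_k -> int}),
    Delta A c.1 a i c'.1 j /\
    (forall m, i m = (c.2 m != 0%N)) /\
    (forall m, ((c'.2 m)%:Z = (c.2 m)%:Z + j m)%R).

Definition run (Sigma K : finType) (k : nat) (A : counter_automaton Sigma K k)
  (x : oword Sigma) (r : nat -> config K k) : Prop :=
  r 0%N = (q0 A, [ffun _ => 0%N]) /\ forall n, step A (r n) (x n) (r n.+1).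

Definition accepting_run (Sigma K : finType) (k : nat)
  (A : counter_automaton Sigma K k) (x : oword Sigma) (r : nat -> config K k) :=
  run A x r /\ forall N, exists n, (N <= n)%N /\ (r n).1 \in final A.

Definition lang (Sigma K : finType) (k : nat) (A : counter_automaton Sigma K k)
  : oword Sigma -> Prop :=
  fun x => exists r, accepting_run A x r.

From mathcomp Require Import all_boot all_order all_algebra zify.
From mathcomp Require Import boolp classical_sets cardinality.
Set Implicit Arguments.
Unset Strict Implicit.
Unset Printing Implicit Defensive.

(** Call a finite word [u] together with a finite set [P] of finite run prefixes
    uncoverable when the words of L that extend [u] and have, for every [t] in
    [P], an accepting run extending [t], are contained in no Borel subset of L.
    As L is not Borel, the root ([], {[c0]}) is uncoverable, and an uncoverable
    pair stays uncoverable when (i) a run prefix is extended past a final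
    state, (ii) a run prefix is split into two incomparable extensions, or
    (iii) the word is split into two incomparable extensions.  For (iii), the
    words all of whose prefixes are uncoverable form at most one point.  For
    (ii), off a Borel set every word of the cylinder has a unique accepting run
    through the prefix, and an analytic set of words with unique runs has a
    Borel hull inside L: this is the Lusin-Souslin argument, run through the
    Lusin separation theorem.  Iterating (i)-(iii) gives a Cantor scheme of
    continuum many words, each with continuum many accepting runs, and
    Cantor-Bernstein turns these injections into bijections. *)

Lemma dependent_choice (T : Type) (P : T -> Prop) (R : T -> T -> Prop) (s0 : T) :
  P s0 -> (forall s, P s -> exists2 s', R s s' & P s') ->
  exists f : nat -> T, f 0 = s0 /\ forall n, R (f n) (f n.+1) /\ P (f n).
Proof.
move=> P0 hR.
have /choice [g hg] : forall s, exists s', P s -> R s s' /\ P s'.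
  move=> s; have [/hR [s' Rs' Ps']|nPs] := EM (P s); first by exists s'.
  by exists s.
have Pf : forall n, P (iter n g s0) by elim=> //= n /hg [].
exists (fun n => iter n g s0); split => // n.
by have [] := hg _ (Pf n).
Qed.

Lemma exists_neq (T U : Type) (f g : T -> U) : f <> g -> exists i, f i <> g i.
Proof. by move=> fg; apply/existsNP => e; exact/fg/funext. Qed.

Lemma first_neq (T : eqType) (f g : nat -> T) :
  f <> g -> exists n, f n <> g n /\ forall i, i < n -> f i = g i.
Proof.
move=> fg; have [i /eqP fgi] := exists_neq fg.
have ex_neq : exists n, f n != g n by exists i.
case: (ex_minnP ex_neq) => n /eqP fgn min_n; exists n; split => // j jn.
by apply/eqP; apply: contraTT jn => /min_n; rewrite -leqNgt.
Qed.

Section Prefixes.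
Variable T : eqType.
Implicit Types s t : seq T.

Lemma prefix_nth (x0 : T) s t i : prefix s t -> i < size s -> nth x0 s i = nth x0 t i.
Proof. by move=> /prefixP [u ->] hi; rewrite nth_cat hi. Qed.

Lemma prefix_size_eq s t : prefix s t -> size s = size t -> s = t.
Proof.
move=> /prefixP [u ->] /eqP; rewrite size_cat -{1}[size s]addn0 eqn_add2l.
by rewrite eq_sym size_eq0 => /eqP ->; rewrite cats0.
Qed.

Lemma prefix_total s1 s2 t : prefix s1 t -> prefix s2 t -> prefix s1 s2 || prefix s2 s1.
Proof.
move=> p1 p2; apply/orP.
have /eqP e1 : take (size s1) t == s1 by rewrite -prefixE.
have /eqP e2 : take (size s2) t == s2 by rewrite -prefixE.
case: (leqP (size s1) (size s2)) => hs.
  by left; rewrite prefixE -{1}e2 take_takel // e1.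
by right; rewrite prefixE -{1}e1 take_takel ?e2 // ltnW.
Qed.

Definition incomparable s t := ~~ prefix s t && ~~ prefix t s.

Lemma incomparable_prefix s t s' t' :
  incomparable s t -> prefix s s' -> prefix t t' -> incomparable s' t'.
Proof.
move=> /andP [st ts] ss' tt'; apply/andP; split; apply/negP => h.
  by have := prefix_total (prefix_trans ss' h) tt'; rewrite (negbTE st) (negbTE ts).
by have := prefix_total ss' (prefix_trans tt' h); rewrite (negbTE st) (negbTE ts).
Qed.

End Prefixes.

Definition oprefix (T : Type) (u : seq T) (x : nat -> T) := mkseq x (size u) = u.

Section OmegaPrefixes.
Variable T : Type.
Implicit Types (u : seq T) (x y : nat -> T).

Lemma oprefixP (x0 : T) u x : oprefix u x <-> forall i, i < size u -> x i = nth x0 u i.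
Proof.
split => [e i hi|h]; first by rewrite -e nth_mkseq.
apply: (@eq_from_nth _ x0); rewrite size_mkseq // => i hi.
by rewrite nth_mkseq // h.
Qed.

Lemma oprefix_mkseq x n : oprefix (mkseq x n) x.
Proof. by rewrite /oprefix size_mkseq. Qed.

Lemma oprefix_rcons u a x : oprefix (rcons u a) x <-> oprefix u x /\ x (size u) = a.
Proof.
rewrite /oprefix size_rcons mkseqS.
by split => [/rcons_inj [-> ->]|[-> ->]].
Qed.

Lemma agree_mkseq n x y : agree n x y <-> mkseq x n = mkseq y n.
Proof.
split => [h|e i hi]; first by apply/eq_in_map => i; rewrite mem_iota => /andP [_ /h].
by have := congr1 (nth (x 0) ^~ i) e; rewrite !nth_mkseq.
Qed.

Lemma oprefix_agree u x y : oprefix u x -> oprefix u y <-> agree (size u) x y.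
Proof.
move=> hx; split => [hy|/agree_mkseq e]; first by apply/agree_mkseq; rewrite hx hy.
by rewrite /oprefix -e.
Qed.

Lemma take_mkseq x m n : m <= n -> take m (mkseq x n) = mkseq x m.
Proof. by move=> mn; rewrite /mkseq -map_take take_iota (minn_idPl mn). Qed.

End OmegaPrefixes.

Section OmegaPrefixesEq.
Variable T : eqType.
Implicit Types (u t : seq T) (x : nat -> T).

Lemma oprefix_prefix t' t x : prefix t' t -> oprefix t x -> oprefix t' x.
Proof.
move=> pt ht; rewrite /oprefix -(take_mkseq x (size_prefix pt)) ht.
by apply/eqP; rewrite -prefixE.
Qed.

Lemma prefix_mkseq x m n : m <= n -> prefix (mkseq x m) (mkseq x n).
Proof. by move=> mn; rewrite prefixE size_mkseq take_mkseq. Qed.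

Lemma oprefix_total t t' x : oprefix t x -> oprefix t' x -> prefix t t' || prefix t' t.
Proof.
move=> ht ht'; rewrite -ht -ht'.
case: (leqP (size t) (size t')) => hs; first by rewrite prefix_mkseq.
by rewrite (prefix_mkseq x (ltnW hs)) orbT.
Qed.

Lemma incomparable_mkseq x y m i :
  i < m -> x i <> y i -> incomparable (mkseq x m) (mkseq y m).
Proof.
move=> im xy; apply/andP; split; apply/negP => /prefix_size_eq;
  rewrite !size_mkseq => /(_ erefl) /(congr1 (nth (x 0) ^~ i)); rewrite !nth_mkseq //.
by move=> /esym.
Qed.

Definition limit (x0 : T) (s : nat -> seq T) : nat -> T := fun i => nth x0 (s i.+1) i.

Lemma limit_oprefix (x0 : T) (s : nat -> seq T) :
  (forall n, prefix (s n) (s n.+1)) -> (forall n, n <= size (s n)) ->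
  forall n, oprefix (s n) (limit x0 s).
Proof.
move=> s_inc s_size n; apply/(oprefixP x0) => i hi; rewrite /limit.
have chain := homo_leq (@prefix_refl T) (fun _ _ _ => @prefix_trans T _ _ _) s_inc.
have hi1 : i < size (s i.+1) := s_size i.+1.
case: (leqP n i.+1) => hn; first by rewrite (prefix_nth x0 (chain _ _ hn)).
by rewrite (prefix_nth x0 (chain _ _ (ltnW hn))).
Qed.

End OmegaPrefixesEq.

Section BorelSets.
Variable S : Type.
Implicit Types B C : oword S -> Prop.

Lemma borel_ext B C : (forall x, B x <-> C x) -> borel B -> borel C.
Proof. by move=> /predeqP ->. Qed.

Lemma borel_clopen B n : (forall x y, agree n x y -> B x -> B y) -> borel B.
Proof. by move=> hB; apply: borel_open => x Bx; exists n => y /hB; apply. Qed.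

Lemma borel0 : borel (fun _ : oword S => False).
Proof. exact: (@borel_clopen _ 0). Qed.

Lemma borelT : borel (fun _ : oword S => True).
Proof. exact: (@borel_clopen _ 0). Qed.

Lemma borel_bigcup (I : countType) (B : I -> oword S -> Prop) :
  (forall i, borel (B i)) -> borel (fun x => exists i, B i x).
Proof.
move=> hB.
apply: (@borel_ext (fun x => exists n, if @unpickle I n is Some i then B i x else False)).
  move=> x; split => [[n]|[i hi]]; first by case: (unpickle n) => // i hi; exists i.
  by exists (pickle i); rewrite pickleK.
by apply: borel_cunion => n; case: (unpickle n) => [i|]; [exact: hB|exact: borel0].
Qed.

Lemma borel_bigcap (I : countType) (B : I -> oword S -> Prop) :
  (forall i, borel (B i)) -> borel (fun x => forall i, B i x).
Proof.
move=> hB; apply: (@borel_ext (fun x => ~ exists i, ~ B i x)).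
  by move=> x; rewrite -forallNP; split => h i; [exact: contrapT|move=> /(_ (h i))].
by apply: borel_compl; apply: borel_bigcup => i; apply: borel_compl.
Qed.

Lemma borelI B C : borel B -> borel C -> borel (fun x => B x /\ C x).
Proof.
move=> hB hC; apply: (@borel_ext (fun x => forall b : bool, if b then B x else C x)).
  by move=> x; split => [h|[hb hc] []//]; split; [exact: (h true)|exact: (h false)].
by apply: borel_bigcap => -[].
Qed.

Lemma borel_const (P : Prop) B : borel B -> borel (fun x => P /\ B x).
Proof.
move=> hB; have [hP|nP] := EM P.
  by apply: borel_ext hB => x; split => [|[]].
by apply: borel_ext borel0 => x; split => [|[]].
Qed.

Lemma borel_imply (P : Prop) B : borel B -> borel (fun x => P -> B x).
Proof.
move=> hB; have [hP|nP] := EM P.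
  by apply: borel_ext hB => x; split => [|/(_ hP)].
by apply: borel_ext borelT => x; split.
Qed.

Lemma borel_oprefix (u : seq S) : borel (oprefix u).
Proof.
apply: (@borel_clopen _ (size u)) => x y xy ux.
by apply/(oprefix_agree _ ux).
Qed.

Lemma borel_set1 (x0 : oword S) : borel (fun x => x = x0).
Proof.
apply: (@borel_ext (fun x => ~ x <> x0)); first by move=> x; split => [/contrapT|->].
apply: borel_compl; apply: borel_open => x nx; have [i hi] := exists_neq nx.
by exists i.+1 => y hy e; apply: hi; rewrite hy // e.
Qed.

End BorelSets.

Section Sigma11.
Variable S : Type.
Implicit Types A B : oword S -> Prop.

Definition closed_rel (F : oword S -> (nat -> nat) -> Prop) :=
  forall x y, (forall n, exists x' y', [/\ agree n x x', agree n y y' & F x' y']) -> F x y.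

(* Analytic sets, presented as projections of closed subsets of S^omega x nat^omega. *)
Definition sigma11 A := exists F, closed_rel F /\ forall x, A x <-> exists y, F x y.

Lemma closed_rel_local (F : oword S -> (nat -> nat) -> Prop) :
  (forall x y, exists n, forall x' y', agree n x x' -> agree n y y' -> F x' y' -> F x y) ->
  closed_rel F.
Proof.
move=> hF x y lim; have [n hn] := hF x y.
by have [x' [y' [xx' yy' F']]] := lim n; exact: hn F'.
Qed.

Lemma closed_rel_bigcap (I : Type) (F : I -> oword S -> (nat -> nat) -> Prop) :
  (forall i, closed_rel (F i)) -> closed_rel (fun x y => forall i, F i x y).
Proof.
by move=> cF x y lim i; apply: cF => n; have [x' [y' [? ? h]]] := lim n; exists x', y'.
Qed.

Lemma sigma11_ext A B : (forall x, A x <-> B x) -> sigma11 A -> sigma11 B.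
Proof. by move=> /predeqP ->. Qed.

Lemma sigma11_closed A : (forall x, (forall n, exists2 x', agree n x x' & A x') -> A x) ->
  sigma11 A.
Proof.
move=> cA; exists (fun x (_ : nat -> nat) => A x); split; last first.
  by move=> x; split => [Ax|[]//]; exists (fun _ => 0).
by move=> x y lim; apply: cA => n; have [x' [y' [? _ ?]]] := lim n; exists x'.
Qed.

Lemma sigma11_set0 : sigma11 (fun _ => False).
Proof. by apply: sigma11_closed => x /(_ 0) []. Qed.

Lemma sigma11_setT : sigma11 (fun _ => True).
Proof. exact: sigma11_closed. Qed.

Lemma sigma11_bigcup (A : nat -> oword S -> Prop) :
  (forall k, sigma11 (A k)) -> sigma11 (fun x => exists k, A k x).
Proof.
move=> /choice [F hF].
exists (fun x y => F (y 0) x (fun i => y i.+1)); split.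
  move=> x y lim; have [cF _] := hF (y 0); apply: cF => n.
  have [x' [y' [xx' yy' F']]] := lim n.+1.
  exists x', (fun i => y' i.+1); split => [i /ltnW|i hi|]; [exact: xx'|exact: (yy' i.+1 hi)|].
  by rewrite (yy' 0).
move=> x; split => [[k /(proj2 (hF k) x) [y Fy]]|[y Fy]].
  by exists (fun i => if i is i'.+1 then y i' else k).
by exists (y 0); apply/(proj2 (hF (y 0)) x); exists (fun i => y i.+1).
Qed.

Lemma pickle_bound (k n : nat) :
  exists2 m, n <= m & forall i, i < n -> pickle (k, i) < m.
Proof.
elim: n => [|n [m nm hm]]; first by exists 0.
exists (maxn m.+1 (pickle (k, n)).+1); first by rewrite leq_max ltnS nm.
move=> i; rewrite ltnS leq_eqVlt => /orP [/eqP ->|/hm him]; rewrite leq_max ?leqnn ?orbT //.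
by rewrite ltnW.
Qed.

Lemma sigma11_bigcap (A : nat -> oword S -> Prop) :
  (forall k, sigma11 (A k)) -> sigma11 (fun x => forall k, A k x).
Proof.
move=> /choice [F hF].
exists (fun x y => forall k, F k x (fun i => y (pickle (k, i)))); split.
  move=> x y lim k; have [cF _] := hF k; apply: cF => n.
  have [m nm hm] := pickle_bound k n.
  have [x' [y' [xx' yy' F']]] := lim m.
  exists x', (fun i => y' (pickle (k, i))); split => // [i /leq_trans /(_ nm)|i /hm];
    [exact: xx'|exact: yy'].
move=> x; split => [Ax|[y Fy] k]; last by apply/(proj2 (hF k) x); eexists; exact: Fy.
have /choice [y Fy] : forall k, exists y, F k x y by move=> k; apply/(proj2 (hF k) x).
exists (fun n => if @unpickle (nat * nat)%type n is Some p then y p.1 p.2 else 0) => k.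
by under eq_fun do rewrite pickleK; exact: Fy.
Qed.

Lemma sigma11I A B : sigma11 A -> sigma11 B -> sigma11 (fun x => A x /\ B x).
Proof.
move=> sA sB; apply: (@sigma11_ext (fun x => forall k : nat, (if k is 0 then A else B) x)).
  by move=> x; split => [h|[hA hB] []//]; split; [exact: (h 0)|exact: (h 1)].
by apply: sigma11_bigcap => -[].
Qed.

Lemma sigma11_const (P : Prop) A : sigma11 A -> sigma11 (fun x => P /\ A x).
Proof.
move=> sA; have [hP|nP] := EM P.
  by apply: sigma11_ext sA => x; split => [|[]].
by apply: sigma11_ext sigma11_set0 => x; split => [|[]].
Qed.

Lemma sigma11_imply (P : Prop) A : sigma11 A -> sigma11 (fun x => P -> A x).
Proof.
move=> sA; have [hP|nP] := EM P.
  by apply: sigma11_ext sA => x; split => [|/(_ hP)].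
by apply: sigma11_ext sigma11_setT => x; split.
Qed.

Lemma sigma11_open U : cantor_open U -> sigma11 U.
Proof.
move=> oU; exists (fun x y => forall z, agree (y 0) x z -> U z); split.
  move=> x y lim z xz; have [x' [y' [xx' yy' F']]] := lim (y 0).+1.
  apply: F'; rewrite -(yy' 0) // => i hi.
  by rewrite -xz // xx' // ltnS (ltnW hi).
move=> x; split => [/oU [n hn]|[y Fy]]; first by exists (fun _ => n).
exact: Fy.
Qed.

Lemma sigma11_compl_open U : cantor_open U -> sigma11 (fun x => ~ U x).
Proof.
move=> oU; apply: sigma11_closed => x lim Ux.
by have [n hn] := oU x Ux; have [x' /hn] := lim n.
Qed.

Lemma borel_sigma11 B : borel B -> sigma11 B /\ sigma11 (fun x => ~ B x).
Proof.
elim => {B} [U oU|U _ [sU sNU]|U _ IH].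
- by split; [exact: sigma11_open|exact: sigma11_compl_open].
- by split => //; apply: sigma11_ext sU => x; split => [Ux /(_ Ux)|/contrapT].
split; first by apply: sigma11_bigcup => n; case: (IH n).
apply: (@sigma11_ext (fun x => forall n, ~ U n x)); first by move=> x; exact: forallNP.
by apply: sigma11_bigcap => n; case: (IH n).
Qed.

End Sigma11.

(** * The Lusin separation theorem *)

Section Separation.
Variable S : countType.
Implicit Types A B : oword S -> Prop.

Definition separated A B :=
  exists C, [/\ borel C, forall x, A x -> C x & forall x, B x -> ~ C x].

Lemma separated_bigcupl (I : countType) (A : I -> oword S -> Prop) B :
  (forall i, separated (A i) B) -> separated (fun x => exists i, A i x) B.
Proof.
move=> /choice [C hC]; exists (fun x => exists i, C i x); split.
- by apply: borel_bigcup => i; case: (hC i).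
- by move=> x [i Ax]; exists i; case: (hC i) => _ + _; apply.
- by move=> x Bx [i Cx]; case: (hC i) => _ _ /(_ x Bx).
Qed.

Lemma separated_bigcupr (I : countType) A (B : I -> oword S -> Prop) :
  (forall i, separated A (B i)) -> separated A (fun x => exists i, B i x).
Proof.
move=> /choice [C hC]; exists (fun x => forall i, C i x); split.
- by apply: borel_bigcap => i; case: (hC i).
- by move=> x Ax i; case: (hC i) => _ + _; apply.
- by move=> x [i Bx] /(_ i); case: (hC i) => _ _ /(_ x Bx).
Qed.

Definition piece (F : oword S -> (nat -> nat) -> Prop) (p : seq S * seq nat) x :=
  exists y, [/\ oprefix p.1 x, oprefix p.2 y & F x y].

Definition grow (p p' : seq S * seq nat) :=
  exists c : S * nat, p' = (rcons p.1 c.1, rcons p.2 c.2).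

Lemma piece_nil F : piece F ([::], [::]) = fun x => exists y, F x y.
Proof. by apply/predeqP => x; split => [[y [_ _ Fxy]]|[y Fxy]]; exists y. Qed.

Lemma piece_grow F p :
  piece F p = fun x => exists c : S * nat, piece F (rcons p.1 c.1, rcons p.2 c.2) x.
Proof.
apply/predeqP => x; split => [[y [px py Fxy]]|[c [y []]]].
  by exists (x (size p.1), y (size p.2)), y; split => //; apply/oprefix_rcons.
by move=> /oprefix_rcons [px _] /oprefix_rcons [py _] Fxy; exists y.
Qed.

Lemma grow_branch (x0 : S) (p : nat -> seq S * seq nat) :
  p 0 = ([::], [::]) -> (forall n, grow (p n) (p n.+1)) ->
  forall n, [/\ size (p n).1 = n, size (p n).2 = n,
    oprefix (p n).1 (limit x0 (fun m => (p m).1)) &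
    oprefix (p n).2 (limit 0 (fun m => (p m).2))].
Proof.
move=> p0 hp.
have sz n : size (p n).1 = n /\ size (p n).2 = n.
  elim: n => [|n [s1 s2]]; first by rewrite p0.
  by have [c ->] := hp n; rewrite /= !size_rcons s1 s2.
have inc n : prefix (p n).1 (p n.+1).1 /\ prefix (p n).2 (p n.+1).2.
  by have [c ->] := hp n; rewrite !prefix_rcons.
move=> n; have [s1 s2] := sz n; split => //; apply: limit_oprefix => m;
  by [case: (inc m)|case: (sz m) => -> _|case: (sz m) => _ ->].
Qed.

Lemma closed_rel_branch F (x0 : S) (p : nat -> seq S * seq nat) :
  closed_rel F -> p 0 = ([::], [::]) -> (forall n, grow (p n) (p n.+1)) ->
  (forall n, exists x, piece F (p n) x) ->
  F (limit x0 (fun m => (p m).1)) (limit 0 (fun m => (p m).2)).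
Proof.
move=> cF p0 hp ne; apply: cF => n; have [x [y [px py Fxy]]] := ne n.
have [s1 s2 lx ly] := grow_branch x0 p0 hp n.
exists x, y; split => //.
  by rewrite -{1}s1; apply/(oprefix_agree _ lx).
by rewrite -{1}s2; apply/(oprefix_agree _ ly).
Qed.

Lemma nonseparated_grow FA FB (pq : (seq S * seq nat) * (seq S * seq nat)) :
  ~ separated (piece FA pq.1) (piece FB pq.2) ->
  exists2 pq', grow pq.1 pq'.1 /\ grow pq.2 pq'.2 &
    ~ separated (piece FA pq'.1) (piece FB pq'.2).
Proof.
move=> nsep; apply: contrapT => H; apply: nsep.
rewrite piece_grow [piece FB _]piece_grow.
apply: separated_bigcupl => a; apply: separated_bigcupr => b.
apply: contrapT => nsep'; apply: H.
by exists ((rcons pq.1.1 a.1, rcons pq.1.2 a.2), (rcons pq.2.1 b.1, rcons pq.2.2 b.2));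
  first by split; [exists a|exists b].
Qed.

(* If A and B are not separated, neither are the pieces along some branch of
   the tree of finite approximations of the witnesses; the limits of that
   branch lie in A and B, and if they first differ at i, the clopen set
   {x | x i = XA i} separates the pieces of length i.+1. *)
Theorem lusin_separation A B : sigma11 A -> sigma11 B ->
  (forall x, A x -> B x -> False) -> separated A B.
Proof.
move=> [FA [cFA hA]] [FB [cFB hB]] disj.
have [[x0 Ax0]|nA] := EM (exists x, A x); last first.
  by exists (fun _ => False); split => [|x Ax|x _ []]; [exact: borel0|apply: nA; exists x].
have -> : A = piece FA ([::], [::]) by rewrite piece_nil; apply/predeqP.
have -> : B = piece FB ([::], [::]) by rewrite piece_nil; apply/predeqP.
apply: contrapT => nsep.
pose NS pq := ~ separated (piece FA pq.1) (piece FB pq.2).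
have [f [f0 hf]] := @dependent_choice _ NS _ (([::], [::]), ([::], [::])) nsep
  (@nonseparated_grow FA FB).
pose XA := limit (x0 0) (fun m => (f m).1.1); pose YA := limit 0 (fun m => (f m).1.2).
pose XB := limit (x0 0) (fun m => (f m).2.1); pose YB := limit 0 (fun m => (f m).2.2).
have fA0 : (f 0).1 = ([::], [::]) by rewrite f0.
have fB0 : (f 0).2 = ([::], [::]) by rewrite f0.
have growA n : grow (f n).1 (f n.+1).1 by case: (hf n) => -[].
have growB n : grow (f n).2 (f n.+1).2 by case: (hf n) => -[].
have FAXA : FA XA YA.
  apply: (closed_rel_branch _ cFA fA0 growA) => n; apply: contrapT => nA.
  have [_ nsepn] := hf n; apply: nsepn; exists (fun _ => False).
  by split => [|x Ax|x _ []]; [exact: borel0|apply: nA; exists x].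
have FBXB : FB XB YB.
  apply: (closed_rel_branch _ cFB fB0 growB) => n; apply: contrapT => nB.
  have [_ nsepn] := hf n; apply: nsepn; exists (fun _ => True).
  by split => // [|x Bx _]; [exact: borelT|apply: nB; exists x].
have [eX|neX] := EM (XA = XB).
  by apply: (disj XA); [apply/hA; exists YA|apply/hB; rewrite eX; exists YB].
have [i hi] := exists_neq neX; have [_ nsepi] := hf i.+1; apply: nsepi.
have [sA _ lA _] := grow_branch (x0 0) fA0 growA i.+1.
have [sB _ lB _] := grow_branch (x0 0) fB0 growB i.+1.
exists (fun x => x i = XA i); split.
- by apply: (@borel_clopen _ _ i.+1) => x y xy <-; rewrite xy.
- by move=> x [y [/(oprefix_agree _ lA) xA _ _]]; apply/esym/xA; rewrite sA.
- move=> x [y [/(oprefix_agree _ lB) xB _ _]] e; apply: hi.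
  by rewrite -e; apply/esym/xB; rewrite sB.
Qed.

Lemma disjoint_borel_family (I : countType) (Z : I -> oword S -> Prop) :
  (forall i, sigma11 (Z i)) -> (forall i j x, i <> j -> Z i x -> Z j x -> False) ->
  exists D : I -> oword S -> Prop, [/\ forall i, borel (D i),
    forall i x, Z i x -> D i x & forall i j x, i <> j -> D i x -> D j x -> False].
Proof.
move=> sZ dZ.
have /choice [C hC] : forall ij : I * I, exists C, ij.1 <> ij.2 ->
    [/\ borel C, forall x, Z ij.1 x -> C x & forall x, Z ij.2 x -> ~ C x].
  move=> [i j]; have [->|ij] := EM (i = j); first by exists (fun _ => True).
  by have [C hC] := lusin_separation (sZ i) (sZ j) (fun x => dZ i j x ij); exists C.
exists (fun i x => forall j, j <> i -> C (i, j) x /\ ~ C (j, i) x); split.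
- move=> i; apply: borel_bigcap => j; have [->|ji] := EM (j = i).
    by apply: borel_ext (borelT _) => x; split.
  have [Cij _ _] := hC (i, j) (nesym ji); have [Cji _ _] := hC (j, i) ji.
  by apply: borel_imply; apply: borelI Cij (borel_compl Cji).
- move=> i x Zix j ji; have [_ + _] := hC (i, j) (nesym ji); have [_ _ +] := hC (j, i) ji.
  by move=> /(_ x Zix) nC /(_ x Zix).
- by move=> i j x ij /(_ j (nesym ij)) [Cij _] /(_ i ij) [_].
Qed.

End Separation.

Section Runs.
Variables (Sigma K : finType) (k : nat) (A : counter_automaton Sigma K k).
Local Notation cfg := (K * {ffun 'I_k -> nat})%type.

Definition c0 : cfg := (q0 A, [ffun _ => 0]).

Definition run_through (t : seq cfg) (x : oword Sigma) :=
  exists2 r, accepting_run A x r & oprefix t r.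

(* A point [y] of the Baire space codes a run at its even coordinates and, at
   the odd coordinate [i.*2.+1], a time [>= i] at which the run is final. *)
Definition run_code (y : nat -> nat) (i : nat) : cfg := odflt c0 (unpickle (y i.*2)).

Definition coded_run (t : seq cfg) (x : oword Sigma) (y : nat -> nat) :=
  forall i, [/\ run_code y 0 = c0, step A (run_code y i) (x i) (run_code y i.+1),
    i < size t -> run_code y i = nth c0 t i &
    i <= y i.*2.+1 /\ (run_code y (y i.*2.+1)).1 \in final A].

Lemma coded_run_closed t : closed_rel (coded_run t).
Proof.
apply: closed_rel_bigcap => i; apply: closed_rel_local => x y.
exists (i.*2.+2 + (y i.*2.+1).*2).+1 => x' y' xx' yy'.
have ey j : j.*2 < (i.*2.+2 + (y i.*2.+1).*2).+1 -> run_code y j = run_code y' j.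
  by move=> hj; rewrite /run_code yy'.
have e1 : y i.*2.+1 = y' i.*2.+1 by apply: yy'; lia.
by rewrite -e1 => -[h0 hs ht [hi hf]]; rewrite !ey ?xx' //; lia.
Qed.

Lemma run_throughP t x : run_through t x <-> exists y, coded_run t x y.
Proof.
split => [[r [[r0 rs] rf] tr]|[y hy]].
  have /choice [w hw] : forall j, exists n, j <= n /\ (r n).1 \in final A by [].
  pose y m := if odd m then w m./2 else pickle (r m./2); exists y.
  have dec i : run_code y i = r i by rewrite /run_code /y odd_double doubleK pickleK.
  have yodd i : y i.*2.+1 = w i by rewrite /y /= odd_double uphalf_double.
  move=> i; rewrite !dec yodd; split => //.
  by move=> hi; apply/(oprefixP c0 t r).1.
exists (run_code y); first split; first split.
- by case: (hy 0).
- by move=> i; case: (hy i).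
- by move=> N; case: (hy N) => _ _ _ hN; exists (y N.*2.+1).
by apply/(oprefixP c0) => i hi; case: (hy i) => _ _ /(_ hi).
Qed.

Lemma sigma11_run_through t : sigma11 (run_through t).
Proof. exists (coded_run t); split; [exact: coded_run_closed|exact: run_throughP]. Qed.

Definition coverable (Q : oword Sigma -> Prop) :=
  exists B, [/\ borel B, forall x, Q x -> B x & forall x, B x -> lang A x].

Definition partial_run (t : seq cfg) (x : oword Sigma) :=
  (0 < size t -> nth c0 t 0 = c0) /\
  forall i, i.+1 < size t -> step A (nth c0 t i) (x i) (nth c0 t i.+1).

Definition final_after (N : nat) (t : seq cfg) :=
  exists i, N <= i < size t /\ (nth c0 t i).1 \in final A.

Lemma partial_run_mkseq x r n : run A x r -> partial_run (mkseq r n) x.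
Proof.
move=> [r0 rs]; rewrite /partial_run size_mkseq.
by split => [n0|i hi]; rewrite !nth_mkseq // ltnW.
Qed.

End Runs.

(** * Borel hulls of analytic sets of words with unique runs *)

Section UniqueRuns.
Variables (Sigma K : finType) (k : nat) (A : counter_automaton Sigma K k).
Local Notation cfg := (K * {ffun 'I_k -> nat})%type.
Local Notation c0 := (c0 A).
Local Notation run_through := (run_through A).
Local Notation coverable := (coverable A).
Local Notation partial_run := (partial_run A).
Local Notation final_after := (final_after A).

Variables (Z : oword Sigma -> Prop) (p : seq cfg).
Hypothesis sigma11_Z : sigma11 Z.
Hypothesis Z_run : forall x, Z x -> run_through p x.
Hypothesis Z_uniq : forall x r r', Z x ->
  accepting_run A x r -> oprefix p r -> accepting_run A x r' -> oprefix p r' -> r = r'.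

Lemma run_prefix_separators : exists D : seq cfg -> oword Sigma -> Prop,
  [/\ forall t, borel (D t),
      forall t x, prefix p t -> Z x -> run_through t x -> D t x &
      forall t t' x, size t = size t' -> D t x -> D t' x -> t = t'].
Proof.
pose Zt m t x := (size t = m /\ prefix p t) /\ Z x /\ run_through t x.
have /choice [D hD] : forall m, exists D : seq cfg -> oword Sigma -> Prop,
    [/\ forall t, borel (D t), forall t x, Zt m t x -> D t x &
        forall t t' x, t <> t' -> D t x -> D t' x -> False].
  move=> m; apply: disjoint_borel_family => [t|t t' x tt'].
    by apply: sigma11_const; apply: sigma11I sigma11_Z (sigma11_run_through A t).
  move=> [[st pt] [Zx [r r_acc tr]]] [[st' pt'] [_ [r' r'_acc tr']]]; apply: tt'.
  have rr' := Z_uniq Zx r_acc (oprefix_prefix pt tr) r'_acc (oprefix_prefix pt' tr').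
  by rewrite -tr -tr' rr' st st'.
exists (fun t => D (size t) t); split.
- by move=> t; case: (hD (size t)).
- by move=> t x pt Zx tx; case: (hD (size t)) => _ + _; apply.
- move=> t t' x st; rewrite st => Dt Dt'; apply: contrapT => tt'.
  by case: (hD (size t')) => _ _ /(_ t t' x tt' Dt Dt').
Qed.

Section Hull.
Variable D : seq cfg -> oword Sigma -> Prop.
Hypothesis borel_D : forall t, borel (D t).
Hypothesis D_cover : forall t x, prefix p t -> Z x -> run_through t x -> D t x.
Hypothesis D_uniq : forall t t' x, size t = size t' -> D t x -> D t' x -> t = t'.

Definition good_prefix (t : seq cfg) (x : oword Sigma) :=
  [/\ prefix p t, forall m, size p <= m <= size t -> D (take m t) x & partial_run t x].

(* A Borel rendering of "x has an accepting run all of whose long prefixes [t]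
   satisfy [D t x]": since the [D t] of a given length are disjoint, such
   prefixes are unique and form a chain. *)
Definition unique_run_hull (x : oword Sigma) :=
  (forall m, size p <= m -> exists t, size t = m /\ good_prefix t x) /\
  (forall N, exists t, final_after N t /\ good_prefix t x).

Lemma good_prefix_take t x m :
  good_prefix t x -> size p <= m <= size t -> good_prefix (take m t) x.
Proof.
move=> [pt Dt [t0 ts]] /andP [pm mt]; have szm : size (take m t) = m by rewrite size_takel.
split.
- by move: pt; rewrite !prefixE => /eqP {2}<-; rewrite take_takel.
- move=> m'; rewrite szm => /andP [pm' m'm]; rewrite take_takel //.
  by apply: Dt; rewrite pm' (leq_trans m'm).
- split => [|i]; rewrite szm => hi.
    by rewrite nth_take // t0 // (leq_trans hi mt).
  by rewrite !nth_take ?(ltnW hi) //; apply: ts; exact: leq_trans hi mt.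
Qed.

Lemma good_prefix_uniq t t' x :
  good_prefix t x -> good_prefix t' x -> size t = size t' -> t = t'.
Proof.
move=> [pt Dt _] [pt' Dt' _] st; apply: (D_uniq st).
  by rewrite -(take_size t); apply: Dt; rewrite size_prefix ?leqnn.
by rewrite -(take_size t'); apply: Dt'; rewrite size_prefix ?leqnn.
Qed.

Lemma good_prefix_chain t t' x :
  good_prefix t x -> good_prefix t' x -> size t <= size t' -> prefix t t'.
Proof.
move=> gt gt' tt'; have [pt _ _] := gt.
have gtt' := good_prefix_take gt' (introT andP (conj (size_prefix pt) tt')).
by rewrite prefixE (good_prefix_uniq gtt' gt) ?size_takel.
Qed.

Lemma borel_unique_run_hull : borel unique_run_hull.
Proof.
have borel_good t : borel (good_prefix t).
  apply: (@borel_ext _ (fun x => prefix p t /\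
      ((forall m, size p <= m <= size t -> D (take m t) x) /\ partial_run t x))).
    by move=> x; split => [[? []]|[]].
  apply: borel_const; apply: borelI.
    by apply: borel_bigcap => m; apply: borel_imply.
  apply: (@borel_clopen _ _ (size t)) => x y xy [t0 ts].
  by split => // i hi; rewrite -xy; [exact: ts|exact: ltnW].
apply: borelI; apply: borel_bigcap => n; last first.
  by apply: borel_bigcup => t; apply: borel_const.
by apply: borel_imply; apply: borel_bigcup => t; apply: borel_const.
Qed.

Lemma unique_run_hull_of_Z x : Z x -> unique_run_hull x.
Proof.
move=> Zx; have [r r_acc pr] := Z_run Zx.
have good m : size p <= m -> good_prefix (mkseq r m) x.
  move=> pm; have pr_m : prefix p (mkseq r m) by rewrite -pr prefix_mkseq.
  split => //; last by apply: partial_run_mkseq; case: r_acc.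
  move=> m'; rewrite size_mkseq => /andP [pm' m'm]; rewrite take_mkseq //.
  apply: D_cover => //.
    by rewrite -pr prefix_mkseq.
  by exists r => //; apply: oprefix_mkseq.
split => [m pm|N]; first by exists (mkseq r m); rewrite size_mkseq; split => //; apply: good.
have [n [Nn fn]] := r_acc.2 (N + size p).
exists (mkseq r n.+1); split; last by apply: good; lia.
by exists n; rewrite size_mkseq nth_mkseq // ltnSn andbT; split => //; lia.
Qed.

Lemma lang_of_unique_run_hull x : unique_run_hull x -> lang A x.
Proof.
move=> [longB finB].
have /choice [s hs] : forall n, exists t, size t = n + size p /\ good_prefix t x.
  by move=> n; apply: longB; rewrite leq_addl.
pose r := limit c0 s.
have good_r t : good_prefix t x -> oprefix t r.
  move=> gt; apply: (oprefix_prefix (t := s (size t))).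
    by case: (hs (size t)) => st gs; apply: (good_prefix_chain gt gs); rewrite st leq_addr.
  apply: limit_oprefix => n; last by case: (hs n) => -> _; rewrite leq_addr.
  by case: (hs n) => sn gn; case: (hs n.+1) => sn1 gn1; apply: (good_prefix_chain gn gn1); lia.
have s_run n : oprefix (s n) r /\ partial_run (s n) x /\ size (s n) = n + size p.
  by case: (hs n) => sn [pn Dn rn]; split; [apply: good_r|].
exists r; split; first split.
- have [sr [[s0 _] sn]] := s_run 1; have s1 : 0 < size (s 1) by rewrite sn.
  by rewrite ((oprefixP c0 _ _).1 sr 0 s1) s0.
- move=> i; have [sr [[_ ss] sn]] := s_run i.+2.
  have si : i.+1 < size (s i.+2) by rewrite sn; lia.
  by rewrite ((oprefixP c0 _ _).1 sr i (ltnW si)) ((oprefixP c0 _ _).1 sr i.+1 si); apply: ss.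
- move=> N; have [t [[i [/andP [Ni it] fi]] gt]] := finB N.
  by exists i; split => //; rewrite ((oprefixP c0 _ _).1 (good_r t gt)).
Qed.

End Hull.

Lemma coverable_unique_run : coverable Z.
Proof.
have [D [borel_D D_cover D_uniq]] := run_prefix_separators.
exists (unique_run_hull D); split.
- exact: borel_unique_run_hull.
- exact: unique_run_hull_of_Z.
- exact: lang_of_unique_run_hull.
Qed.

End UniqueRuns.

(** * Splitting uncoverable cylinders *)

Section Coverable.
Variables (Sigma K : finType) (k : nat) (A : counter_automaton Sigma K k).
Local Notation cfg := (K * {ffun 'I_k -> nat})%type.
Local Notation coverable := (coverable A).
Implicit Types Q : oword Sigma -> Prop.

Lemma coverable_sub Q Q' : (forall x, Q x -> Q' x) -> coverable Q' -> coverable Q.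
Proof. by move=> QQ' [B [bB Q'B BL]]; exists B; split => // x /QQ'/Q'B. Qed.

Lemma coverable0 Q : (forall x, ~ Q x) -> coverable Q.
Proof. by move=> nQ; exists (fun _ => False); split => [|x /nQ|] //; exact: borel0. Qed.

Lemma coverable_cover (I : countType) (C : I -> Prop) (Q' : I -> oword Sigma -> Prop) Q :
  (forall x, Q x -> exists2 i, C i & Q' i x) -> (forall i, C i -> coverable (Q' i)) ->
  coverable Q.
Proof.
move=> QQ' cQ'.
have /choice [B hB] : forall i, exists B, [/\ borel B, forall x, C i -> Q' i x -> B x &
    forall x, B x -> lang A x].
  move=> i; have [/cQ' [B [bB Q'B BL]]|nC] := EM (C i); first by exists B; split => // x _ /Q'B.
  by exists (fun _ => False); split => //; exact: borel0.
exists (fun x => exists i, B i x); split.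
- by apply: borel_bigcup => i; case: (hB i).
- by move=> x /QQ' [i Ci Q'x]; exists i; case: (hB i) => _ /(_ x Ci Q'x).
- by move=> x [i Bx]; case: (hB i) => _ _ /(_ x Bx).
Qed.

Lemma coverableU Q Q' : coverable Q -> coverable Q' -> coverable (fun x => Q x \/ Q' x).
Proof.
move=> cQ cQ'.
apply: (coverable_cover (C := fun _ => True) (Q' := fun b : bool => if b then Q else Q')).
  by move=> x [Qx|Q'x]; [exists true|exists false].
by move=> [].
Qed.

Lemma coverable_subsingleton Q :
  (forall x, Q x -> lang A x) -> (forall x y, Q x -> Q y -> x = y) -> coverable Q.
Proof.
move=> QL Q1; have [[x0 Qx0]|nQ] := EM (exists x, Q x); last first.
  by apply: coverable0 => x Qx; apply: nQ; exists x.
exists (fun x => x = x0); split => [|x Qx|x ->]; [exact: borel_set1|exact: Q1|exact: QL].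
Qed.

Definition cylinder (u : seq Sigma) (P : seq (seq cfg)) (x : oword Sigma) :=
  [/\ oprefix u x, lang A x & forall t, t \in P -> run_through A t x].

Definition uncoverable u P := ~ coverable (cylinder u P).

Lemma uncoverable_eq_mem u P P' : P =i P' -> uncoverable u P -> uncoverable u P'.
Proof.
move=> PP' nP cP'; apply: nP; apply: coverable_sub cP' => x [ux Lx Px].
by split => // t; rewrite -PP'; apply: Px.
Qed.

Lemma lang_run_through x : lang A x <-> run_through A [::] x.
Proof. by split => [[r r_acc]|[r r_acc _]]; exists r. Qed.

Lemma sigma11_cylinder u P : sigma11 (cylinder u P).
Proof.
apply: (@sigma11_ext _ (fun x => oprefix u x /\
    (run_through A [::] x /\ forall j, j < size P -> run_through A (nth [::] P j) x))).
  move=> x; split => [[ux [Lx Px]]|[ux Lx Px]].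
    split => //; first exact/lang_run_through.
    by move=> t /(nthP [::]) [j jP <-]; apply: Px.
  split; [done|split; first exact/lang_run_through].
  by move=> j jP; apply: Px; rewrite mem_nth.
apply: sigma11I; first by case: (borel_sigma11 (borel_oprefix u)).
apply: sigma11I; first exact: sigma11_run_through.
by apply: sigma11_bigcap => j; apply: sigma11_imply; apply: sigma11_run_through.
Qed.

End Coverable.

Section Splitting.
Variables (Sigma K : finType) (k : nat) (A : counter_automaton Sigma K k).
Local Notation cfg := (K * {ffun 'I_k -> nat})%type.
Local Notation coverable := (coverable A).
Local Notation uncoverable := (uncoverable A).
Local Notation cylinder := (cylinder A).
Local Notation run_through := (run_through A).
Local Notation final_after := (final_after A).

Lemma run_through_mkseq x r n : accepting_run A x r -> run_through (mkseq r n) x.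
Proof. by exists r => //; apply: oprefix_mkseq. Qed.

Lemma final_after_le N N' t : N <= N' -> final_after N' t -> final_after N t.
Proof. by move=> NN' [i [/andP [N'i it] fi]]; exists i; rewrite (leq_trans NN' N'i). Qed.

Lemma uncoverable_visit_final u p P : uncoverable u (p :: P) ->
  exists2 p', prefix p p' /\ final_after (size p) p' & uncoverable u (p' :: P).
Proof.
move=> nc; apply: contrapT => H; apply: nc.
apply: (coverable_cover (C := fun p' => prefix p p' /\ final_after (size p) p')
  (Q' := fun p' => cylinder u (p' :: P))) => [x [ux Lx Px]|p' Cp']; last first.
  by apply: contrapT => nc'; apply: H; exists p'.
have [r r_acc pr] := Px p (mem_head _ _); have [n [pn fn]] := r_acc.2 (size p).
exists (mkseq r n.+1).
  split; first by rewrite -pr prefix_mkseq // leqW.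
  by exists n; rewrite size_mkseq nth_mkseq // ltnSn andbT pn.
split => // t; rewrite inE => /orP [/eqP ->|tP]; first exact: run_through_mkseq.
by apply: Px; rewrite inE tP orbT.
Qed.

(* The words of the cylinder all of whose prefixes are uncoverable form at most
   one point, and the rest of the cylinder is covered by coverable cylinders. *)
Lemma uncoverable_split_word u P : uncoverable u P -> exists u0 u1,
  [/\ prefix u u0, prefix u u1, incomparable u0 u1, uncoverable u0 P & uncoverable u1 P].
Proof.
move=> nc; apply: contrapT => H; apply: nc.
pose E x := cylinder u P x /\ forall v, prefix u v -> oprefix v x -> uncoverable v P.
apply: (coverable_sub (Q' := fun x =>
    (exists2 v, prefix u v /\ ~ uncoverable v P & cylinder v P x) \/ E x)).
  move=> x [ux Lx Px]; have [[v [uv vx ncv]]|nv] :=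
    EM (exists v, [/\ prefix u v, oprefix v x & ~ uncoverable v P]).
    by left; exists v.
  right; split => // v uv vx; apply: contrapT => cv; apply: nv; by exists v.
apply: coverableU.
  apply: (coverable_cover (C := fun v => prefix u v /\ ~ uncoverable v P)
    (Q' := fun v => cylinder v P)) => // v [_].
  exact: contrapT.
apply: coverable_subsingleton => [x [[_ Lx _] _]//|x y [[ux _ _] Ex] [[uy _ _] Ey]].
apply: contrapT => xy; have [i xyi] := exists_neq xy.
pose m := maxn (size u) i.+1.
have ux_m : prefix u (mkseq x m) by rewrite -ux prefix_mkseq // leq_maxl.
have uy_m : prefix u (mkseq y m) by rewrite -uy prefix_mkseq // leq_maxl.
apply: H; exists (mkseq x m), (mkseq y m); split => //.
- by apply: incomparable_mkseq xyi; rewrite leq_maxr.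
- by apply: Ex => //; apply: oprefix_mkseq.
- by apply: Ey => //; apply: oprefix_mkseq.
Qed.

(* Off the Borel hull of the cylinders of incomparable pairs of extensions of
   [p], every word of the cylinder has a unique accepting run through [p]. *)
Lemma uncoverable_split_run u p P : uncoverable u (p :: P) -> exists p' p'',
  [/\ prefix p p', prefix p p'', incomparable p' p'' & uncoverable u (p' :: p'' :: P)].
Proof.
move=> nc; apply: contrapT => H; apply: nc.
pose C pp := [/\ prefix p pp.1, prefix p pp.2 & incomparable pp.1 pp.2].
have [B [bB UB BL]] : coverable (fun x => exists2 pp, C pp & cylinder u (pp.1 :: pp.2 :: P) x).
  apply: (coverable_cover (C := C) (Q' := fun pp => cylinder u (pp.1 :: pp.2 :: P)))
    => // -[p' p''] [pp' pp'' inc].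
  by apply: contrapT => nc'; apply: H; exists p', p''.
apply: (coverable_sub (Q' := fun x => B x \/ (cylinder u (p :: P) x /\ ~ B x))).
  by move=> x cx; have [Bx|nBx] := EM (B x); [left|right].
apply: coverableU; first by exists B.
apply: (@coverable_unique_run _ _ _ A _ p).
- apply: sigma11I; first exact: sigma11_cylinder.
  by case: (borel_sigma11 bB).
- by move=> x [[_ _ Px] _]; apply: Px; rewrite mem_head.
move=> x r r' [[ux Lx Px] nBx] r_acc pr r'_acc pr'; apply: contrapT => rr'.
have [i rri] := exists_neq rr'; pose m := maxn (size p) i.+1.
apply: nBx; apply: UB; exists (mkseq r m, mkseq r' m).
  split => /=; first by rewrite -pr prefix_mkseq // leq_maxl.
    by rewrite -pr' prefix_mkseq // leq_maxl.
  by apply: incomparable_mkseq rri; rewrite leq_maxr.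
split => // t; rewrite !inE => /or3P [/eqP ->|/eqP ->|tP]; try exact: run_through_mkseq.
by apply: Px; rewrite inE tP orbT.
Qed.

Definition branches (p p' p'' : seq cfg) :=
  [/\ prefix p p', prefix p p'', incomparable p' p'',
      final_after (size p) p' & final_after (size p) p''].

Lemma uncoverable_branch_run u p P : uncoverable u (p :: P) ->
  exists p' p'', branches p p' p'' /\ uncoverable u (p' :: p'' :: P).
Proof.
move=> /uncoverable_split_run [p1 [p2 [pp1 pp2 inc nc]]].
have [q1 [p1q1 f1] nc1] := uncoverable_visit_final nc.
have [q2 [p2q2 f2] nc2] : exists2 q2, prefix p2 q2 /\ final_after (size p2) q2 &
    uncoverable u (q2 :: q1 :: P).
  by apply: uncoverable_visit_final; apply: uncoverable_eq_mem nc1 => t; rewrite !inE orbCA.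
exists q1, q2; split; last by apply: uncoverable_eq_mem nc2 => t; rewrite !inE orbCA.
split; [exact: prefix_trans pp1 p1q1|exact: prefix_trans pp2 p2q2|
        exact: incomparable_prefix inc p1q1 p2q2| |].
- exact: final_after_le (size_prefix pp1) f1.
- exact: final_after_le (size_prefix pp2) f2.
Qed.

Lemma uncoverable_branch_runs u P Q : uncoverable u (Q ++ P) -> exists P',
  [/\ size P' = (size P).*2,
      forall j, j < size P ->
        branches (nth [::] P j) (nth [::] P' j.*2) (nth [::] P' j.*2.+1) &
      uncoverable u (Q ++ P')].
Proof.
elim: P Q => [|p P IH] Q nc; first by exists [::].
have /uncoverable_branch_run [p' [p'' [br nc']]] : uncoverable u (p :: Q ++ P).
  by apply: uncoverable_eq_mem nc => t; rewrite !(mem_cat, inE) orbCA.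
have /IH [P' [sz brP nc'']] : uncoverable u ((Q ++ [:: p'; p'']) ++ P).
  apply: uncoverable_eq_mem nc' => t; rewrite !(mem_cat, inE).
  by case: (t == p'); case: (t == p''); case: (t \in Q).
exists [:: p', p'' & P']; split.
- by rewrite /= sz doubleS.
- by move=> [|j] //=; rewrite ltnS => /brP.
- by apply: uncoverable_eq_mem nc'' => t; rewrite -catA.
Qed.

Lemma uncoverable_nonborel : ~ borel (lang A) -> uncoverable [::] [:: [:: c0 A]].
Proof.
move=> nb [B [bB LB BL]]; apply: nb; apply: borel_ext bB => x; split; first exact: BL.
move=> /[dup] Lx [r [[r0 rs] rf]]; apply: LB; split => // t; rewrite inE => /eqP ->.
by exists r => //; apply/(oprefixP (c0 A)) => -[|] // _; rewrite r0.
Qed.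

End Splitting.

Section Cardinality.
Local Open Scope classical_set_scope.

Lemma card_continuum_eq (T : Type) (P : T -> Prop) :
  ([set: nat -> bool] #= P)%card -> card_continuum P.
Proof.
move=> /card_bijP [h [hinv hK Kh]].
exists (fun b => exist P (val (h (SigSub (mem_set (I : setT b))))) (set_mem (valP _))).
exists (fun z => val (hinv (SigSub (mem_set (proj2_sig z))))).
- move=> b /=.
  have -> : SigSub (mem_set (set_mem (valP (h (SigSub (mem_set (I : setT b))))))) =
     h (SigSub (mem_set (I : setT b))) by apply: val_inj.
  by rewrite hK.
- move=> [x Px] /=; apply: eq_exist.
  have -> : SigSub (mem_set (I : setT (val (hinv (SigSub (mem_set Px)))))) =
    hinv (SigSub (mem_set Px)) by apply: val_inj.
  by rewrite Kh.
Qed.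

Definition code_seq (T : countType) (x : nat -> T) : nat -> bool :=
  fun n => if @unpickle (nat * nat)%type n is Some (i, c) then pickle (x i) == c else false.

Lemma code_seq_inj (T : countType) : injective (@code_seq T).
Proof.
move=> x y e; apply: funext => i.
have := congr1 (fun z => z (pickle (i, pickle (y i)))) e.
by rewrite /code_seq pickleK eqxx => /eqP /(pcan_inj pickleK).
Qed.

Lemma card_continuum_of_injective (T : countType) (P : (nat -> T) -> Prop)
    (f : (nat -> bool) -> nat -> T) :
  injective f -> (forall b, P (f b)) -> card_continuum P.
Proof.
move=> f_inj Pf; apply: card_continuum_eq; apply: Cantor_Bernstein.
  apply: (@card_le_trans _ _ _ (f @` setT)).
    by have := inj_card_eq (in2W f_inj) (A := setT); rewrite card_eq_le => /andP [].
  by apply: subset_card_le => _ [b _ <-].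
apply: (@card_le_trans _ _ _ ((@code_seq T) @` P)).
  by have := inj_card_eq (in2W (@code_seq_inj T)) (A := P); rewrite card_eq_le => /andP [].
exact: card_leT.
Qed.

End Cardinality.

(** * The Cantor scheme *)

Section CantorScheme.
Variables (Sigma K : finType) (k : nat) (A : counter_automaton Sigma K k).
Local Notation cfg := (K * {ffun 'I_k -> nat})%type.
Local Notation uncoverable := (uncoverable A).
Local Notation branches := (branches A).
Local Notation node_t := (seq Sigma * seq (seq cfg))%type.

Definition scheme_step (N : node_t) (M : (seq Sigma * seq Sigma) * seq (seq cfg)) :=
  [/\ size M.2 = (size N.2).*2,
      forall j, j < size N.2 ->
        branches (nth [::] N.2 j) (nth [::] M.2 j.*2) (nth [::] M.2 j.*2.+1),
      [/\ prefix N.1 M.1.1, prefix N.1 M.1.2 & incomparable M.1.1 M.1.2],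
      uncoverable M.1.1 M.2 & uncoverable M.1.2 M.2].

Lemma uncoverable_scheme_step (N : node_t) :
  uncoverable N.1 N.2 -> exists M, scheme_step N M.
Proof.
move=> /(uncoverable_branch_runs (Q := [::])) [P' [sz br nc]].
have [u0 [u1 [uu0 uu1 inc nc0 nc1]]] := uncoverable_split_word nc.
by exists (u0, u1, P').
Qed.

Variable a0 : Sigma.
Variable F : node_t -> (seq Sigma * seq Sigma) * seq (seq cfg).
Hypothesis F_step : forall N, uncoverable N.1 N.2 -> scheme_step N (F N).
Hypothesis nonborel : ~ borel (lang A).

Definition child (N : node_t) (b : bool) : node_t :=
  (if b then (F N).1.2 else (F N).1.1, (F N).2).

Fixpoint node (al : nat -> bool) (n : nat) : node_t :=
  if n is n'.+1 then child (node al n') (al n') else ([::], [:: [:: c0 A]]).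

(* The run prefixes of a node are listed so that those of the children of the
   [j]-th one sit at positions [j.*2] and [j.*2.+1]. *)
Fixpoint branch_index (be : nat -> bool) (n : nat) : nat :=
  if n is n'.+1 then (branch_index be n').*2 + be n' else 0.

Definition run_prefix al be n := nth [::] (node al n).2 (branch_index be n).

Lemma node_uncoverable al n :
  uncoverable (node al n).1 (node al n).2 /\ size (node al n).2 = 2 ^ n.
Proof.
elim: n => [|n [nc sz]]; first by split => //; exact: uncoverable_nonborel.
have [szF _ _ nc0 nc1] := F_step nc.
by split; [rewrite /= /child; case: (al n)|rewrite /= szF sz expnS mul2n].
Qed.

Lemma node_step al n : scheme_step (node al n) (F (node al n)).
Proof. by apply: F_step; case: (node_uncoverable al n). Qed.

Lemma branch_index_size al be n : branch_index be n < size (node al n).2.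
Proof.
rewrite (node_uncoverable al n).2.
by elim: n => [|n IH] //=; rewrite expnS; case: (be n); lia.
Qed.

Lemma branches_run_prefix al be n :
  branches (run_prefix al be n)
    (nth [::] (F (node al n)).2 (branch_index be n).*2)
    (nth [::] (F (node al n)).2 (branch_index be n).*2.+1).
Proof. by have [_ br _ _ _] := node_step al n; apply/br/branch_index_size. Qed.

Lemma run_prefix_step al be n :
  prefix (run_prefix al be n) (run_prefix al be n.+1) /\
  final_after A (size (run_prefix al be n)) (run_prefix al be n.+1).
Proof.
have := branches_run_prefix al be n; rewrite /run_prefix /=.
by case: (be n) => -[]; rewrite ?addn0 ?addn1.
Qed.

Lemma size_run_prefix al be n : n <= size (run_prefix al be n).
Proof.
elim: n => [|n IH] //; have [_ [i [/andP [ni ir] _]]] := run_prefix_step al be n.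
exact: leq_ltn_trans IH (leq_ltn_trans ni ir).
Qed.

Lemma node_word_step al n :
  prefix (node al n).1 (node al n.+1).1 /\ size (node al n).1 < size (node al n.+1).1.
Proof.
have [_ _ [u0 u1 inc] _ _] := node_step al n.
have longer v w : prefix (node al n).1 v -> prefix (node al n).1 w -> incomparable v w ->
    size (node al n).1 < size v.
  move=> uv uw /andP [nvw _]; rewrite ltnNge; apply: contra nvw => vu.
  by rewrite -(prefix_size_eq uv (anti_leq (introT andP (conj (size_prefix uv) vu)))).
rewrite /= /child; case: (al n) => /=; split => //; last exact: longer u0 u1 inc.
by apply: longer u1 u0 _; rewrite /incomparable andbC.
Qed.

Lemma size_node_word al n : n <= size (node al n).1.
Proof.
elim: n => [|n IH] //; have [_] := node_word_step al n; exact: leq_ltn_trans.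
Qed.

Definition branch_word al := limit a0 (fun n => (node al n).1).
Definition branch_run al be := limit (c0 A) (run_prefix al be).

Lemma oprefix_branch_word al n : oprefix (node al n).1 (branch_word al).
Proof.
apply: limit_oprefix => m; first by case: (node_word_step al m).
exact: size_node_word.
Qed.

Lemma oprefix_branch_run al be n : oprefix (run_prefix al be n) (branch_run al be).
Proof.
apply: limit_oprefix => m; first by case: (run_prefix_step al be m).
exact: size_run_prefix.
Qed.

Lemma branch_run_accepting al be : accepting_run A (branch_word al) (branch_run al be).
Proof.
have nth_run n i : i < size (run_prefix al be n) ->
    branch_run al be i = nth (c0 A) (run_prefix al be n) i.
  exact: (oprefixP _ _ _).1 (oprefix_branch_run al be n) i.
split; first split.
- by rewrite (nth_run 0).
- move=> i; have [nc _] := node_uncoverable al i.+2.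
  have [x [ux _ Px]] : exists x, cylinder A (node al i.+2).1 (node al i.+2).2 x.
    by apply: contrapT => nx; apply: nc; apply: coverable0 => x cx; apply: nx; exists x.
  have [r [[_ rs] _] rp] := Px _ (mem_nth [::] (branch_index_size al be i.+2)).
  have /(oprefix_agree _ (oprefix_branch_run al be i.+2)) rr := rp.
  have /(oprefix_agree _ (oprefix_branch_word al i.+2)) xx := ux.
  have := size_run_prefix al be i.+2; have := size_node_word al i.+2 => sx sr.
  by rewrite !rr ?xx; [exact: rs|lia|lia|lia].
- move=> N; have [_ [i [/andP [Ni ir] fi]]] := run_prefix_step al be N.
  exists i; rewrite (nth_run N.+1) //; split => //.
  exact: leq_trans (size_run_prefix al be N) Ni.
Qed.

Lemma node_agree al al' n : (forall i, i < n -> al i = al' i) -> node al n = node al' n.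
Proof. by elim: n => [|n IH] //= aa'; rewrite IH ?aa' // => i /ltnW /aa'. Qed.

Lemma branch_index_agree be be' n :
  (forall i, i < n -> be i = be' i) -> branch_index be n = branch_index be' n.
Proof. by elim: n => [|n IH] //= bb'; rewrite IH ?bb' // => i /ltnW /bb'. Qed.

Lemma branch_run_inj al : injective (branch_run al).
Proof.
move=> be be' e; apply: contrapT => bb'; have [n [bn bb'n]] := first_neq bb'.
have [_ _ inc _ _] := branches_run_prefix al be n.
have o1 := oprefix_branch_run al be n.+1.
have o2 := oprefix_branch_run al be' n.+1; rewrite -e in o2.
have := oprefix_total o1 o2; rewrite /run_prefix /= -(branch_index_agree bb'n).
case: (be n) (be' n) bn => -[] //= _; rewrite ?addn0 ?addn1.
  by case/andP: inc => /negbTE -> /negbTE ->.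
by case/andP: inc => /negbTE -> /negbTE ->.
Qed.

Lemma branch_word_inj : injective branch_word.
Proof.
move=> al al' e; apply: contrapT => aa'; have [n [an aa'n]] := first_neq aa'.
have [_ _ [_ _ inc] _ _] := node_step al n.
have o1 := oprefix_branch_word al n.+1.
have o2 := oprefix_branch_word al' n.+1; rewrite -e in o2.
have := oprefix_total o1 o2; rewrite /= /child -(node_agree aa'n).
by case: (al n) (al' n) an => -[] //= _; case/andP: inc => /negbTE -> /negbTE ->.
Qed.

End CantorScheme.

Theorem mainTheorem16 (Sigma K : finType) (k : nat)
  (A : counter_automaton Sigma K k) :
  analytic (lang A) -> ~ borel (lang A) ->
  card_continuum (fun x : oword Sigma => card_continuum (accepting_run A x)).
Proof.
(* The analyticity hypothesis holds for every counter automaton. *)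
move=> _ nonborel.
have [x0 _] : exists x, lang A x.
  apply: contrapT => nL; apply: nonborel; apply: borel_ext (borel0 _) => x.
  by split => // Lx; apply: nL; exists x.
have /choice [F F_step] : forall N, exists M, uncoverable A N.1 N.2 -> scheme_step A N M.
  move=> N; have [/uncoverable_scheme_step [M hM]|nN] := EM (uncoverable A N.1 N.2).
    by exists M.
  by exists ([::], [::], [::]) => /nN.
apply: (card_continuum_of_injective (branch_word_inj (a0 := x0 0) F_step nonborel)).
move=> al.
exact: (card_continuum_of_injective (branch_run_inj F_step nonborel (al := al))
  (branch_run_accepting (x0 0) F_step nonborel al)).
Qed.
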